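(* There exists a constant $C_\Gamma$ depending only on $\Gamma$ such that, for $n$ large enough and every realization, $$\sup_{t\in[0,T]}\|C^n_t\|_{-3}\le T\,C_\Gamma\big(S_n^{(ij,ik)}+S_n^{(ij,jk)}\big),$$ where $\|\cdot\|_{-3}$ is the norm of $H^{-3}(\mathbb T^2)$.
   Context: $\mathbb T=\mathbb R/2\pi\mathbb Z$, $\Gamma\in C^\infty(\mathbb T^2)$, $T>0$. For $n\ge2$, $p_n\in(0,1]$, $\xi^{(n)}_{ij}\in\{0,1\}$, $\hat\xi^{(n)}_{ij}=\xi^{(n)}_{ij}/p_n-1$. Let $t\mapsto(\theta^{1,n}_t,\dots,\theta^{n,n}_t)$ be continuous $\mathbb T^n$-valued paths (e.g. the solution of $d\theta^{i,n}_t=\frac1{np_n}\sum_j\xi^{(n)}_{ij}\Gamma(\theta^{i,n}_t,\theta^{j,n}_t)dt+dB^i_t$). For test functions $g$ on $\mathbb T^2$, $C^n_t(g)=\int_0^t\frac1{n^3}\sum_{i,j,k}\hat\xi^{(n)}_{ij}\hat\xi^{(n)}_{ik}\partial_{\theta_1}g(\theta^{i,n}_s,\theta^{j,n}_s)\Gamma(\theta^{i,n}_s,\theta^{k,n}_s)ds+\int_0^t\frac1{n^3}\sum_{i,j,k}\hat\xi^{(n)}_{ij}\hat\xi^{(n)}_{jk}\partial_{\theta_2}g(\theta^{i,n}_s,\theta^{j,n}_s)\Gamma(\theta^{j,n}_s,\theta^{k,n}_s)ds$. Define $S_n^{(ij,ik)}=\sup_{r,s,t\in\{\pm1\}^n}\big|\frac1{n^3}\sum_{i,j,k}\hat\xi^{(n)}_{ij}\hat\xi^{(n)}_{ik}r_is_jt_k\big|$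 and $S_n^{(ij,jk)}=\sup_{r,s,t\in\{\pm1\}^n}\big|\frac1{n^3}\sum_{i,j,k}\hat\xi^{(n)}_{ij}\hat\xi^{(n)}_{jk}r_is_jt_k\big|$. *)

From Stdlib Require Import Reals List.
From Coquelicot Require Import Coquelicot.
Open Scope R_scope.

(** Finite sum over indices 0..n-1 (indices i = 1..n of the paper shifted by one). *)
Fixpoint fsum (n : nat) (f : nat -> R) : R :=
  match n with
  | O => 0
  | S m => fsum m f + f m
  end.

(** Functions on the torus T^2 = (R/2piZ)^2 are represented by their
    2pi-periodic lifts R -> R -> R. *)
Definition periodic2 (f : R -> R -> R) : Prop :=
  forall x y, f (x + 2 * PI) y = f x y /\ f x (y + 2 * PI) = f x y.

Definition pdir (d : bool) (f : R -> R -> R) : R -> R -> R :=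
  if d then fun x y => Derive (fun x' => f x' y) x
  else fun x y => Derive (fun y' => f x y') y.

Fixpoint pdl (l : list bool) (f : R -> R -> R) : R -> R -> R :=
  match l with
  | nil => f
  | d :: l' => pdir d (pdl l' f)
  end.

Definition continuous2 (f : R -> R -> R) : Prop :=
  forall x y, continuous (fun z : R * R => f (fst z) (snd z)) (x, y).

Definition smooth_T2 (f : R -> R -> R) : Prop :=
  periodic2 f /\
  forall l : list bool,
    continuous2 (pdl l f) /\
    (forall x y, ex_derive (fun x' => pdl l f x' y) x /\
                 ex_derive (fun y' => pdl l f x y') y).

Definition pd (a b : nat) (f : R -> R -> R) : R -> R -> R :=
  pdl (repeat true a ++ repeat false b) f.

Definition int_T2 (f : R -> R -> R) : R :=
  RInt (fun x => RInt (fun y => f x y) 0 (2 * PI)) 0 (2 * PI).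

Definition H3norm (g : R -> R -> R) : R :=
  sqrt (fsum 4 (fun a => fsum (4 - a) (fun b =>
          int_T2 (fun x y => (pd a b g x y) ^ 2)))).

Definition Hm3norm (L : (R -> R -> R) -> R) : Rbar :=
  Lub_Rbar (fun v => exists g, smooth_T2 g /\ H3norm g <= 1 /\ v = Rabs (L g)).

Definition b2R (b : bool) : R := if b then 1 else 0.
Definition sgn (b : bool) : R := if b then 1 else -1.

Definition xihat (p : R) (xi : nat -> nat -> bool) (i j : nat) : R :=
  b2R (xi i j) / p - 1.

(** The functional C^n_t(g); theta i s is (a lift of) theta^{i,n}_s. *)
Definition Cn (n : nat) (p : R) (xi : nat -> nat -> bool) (Gam : R -> R -> R)
  (theta : nat -> R -> R) (t : R) (g : R -> R -> R) : R :=
  RInt (fun s => / (INR n ^ 3) *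
    fsum n (fun i => fsum n (fun j => fsum n (fun k =>
      xihat p xi i j * xihat p xi i k *
      pdl (true :: nil) g (theta i s) (theta j s) *
      Gam (theta i s) (theta k s))))) 0 t
  + RInt (fun s => / (INR n ^ 3) *
    fsum n (fun i => fsum n (fun j => fsum n (fun k =>
      xihat p xi i j * xihat p xi j k *
      pdl (false :: nil) g (theta i s) (theta j s) *
      Gam (theta j s) (theta k s))))) 0 t.

(** S_n^{(ij,ik)} and S_n^{(ij,jk)}: suprema over sign vectors r,s,t in {+-1}^n
    (encoded as bool-valued functions; only the first n entries matter). The
    suprema are over finitely many values, hence finite; we take the real part. *)
Definition S_ijik (n : nat) (p : R) (xi : nat -> nat -> bool) : R :=
  real (Lub_Rbar (fun v => exists r s t : nat -> bool,
    v = Rabs (/ (INR n ^ 3) *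
      fsum n (fun i => fsum n (fun j => fsum n (fun k =>
        xihat p xi i j * xihat p xi i k * sgn (r i) * sgn (s j) * sgn (t k))))))).

Definition S_ijjk (n : nat) (p : R) (xi : nat -> nat -> bool) : R :=
  real (Lub_Rbar (fun v => exists r s t : nat -> bool,
    v = Rabs (/ (INR n ^ 3) *
      fsum n (fun i => fsum n (fun j => fsum n (fun k =>
        xihat p xi i j * xihat p xi j k * sgn (r i) * sgn (s j) * sgn (t k))))))).

From Stdlib Require Import Reals Lra Lia FunctionalExtensionality List.
From Coquelicot Require Import Coquelicot.
Open Scope R_scope.

(* At each time the integrand of [C^n_t(g)] is a trilinear sum
   [sum_ijk B_ijk (dg)(θ_i, θ_j) Γ(θ_i, θ_k)] (resp. [Γ(θ_j, θ_k)]).  On the circle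
   [f y = mean f + ∫ K_y f'] with a kernel [|K_y| <= 1], so a periodic [F] is
   [F x y = sum_α ∫∫ a(s) b(t) (∂^α F)(s, t)] over [α ∈ {1, ∂_y, ∂_x, ∂_y∂_x}], with kernels
   bounded by 1.  Hence [|sum_ij W_ij F(x_i, y_j)|] is at most
   [sup_{|p|,|q| <= 1} |sum_ij W_ij p_i q_j|] times the [L^1] norms of these four derivatives.
   Applying this to [dg] and then to [Γ] bounds the integrand by the supremum of the trilinear
   form over the unit cube, which multilinearity moves to sign vectors, i.e. to [S_n].  The
   [L^1] norms of derivatives of order [<= 3] of [g] are controlled by [‖g‖_{H^3}] through
   [|v| <= (1 + v^2) / 2]. *)

(** * Finite sums and integrals *)

Lemma fsum_ext n f g : (forall i, (i < n)%nat -> f i = g i) -> fsum n f = fsum n g.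
Proof.
  induction n; simpl; intros H; auto.
  rewrite IHn, H; auto; intros; apply H; lia.
Qed.

Lemma fsum_plus n f g : fsum n (fun i => f i + g i) = fsum n f + fsum n g.
Proof. induction n; simpl; [lra|]. rewrite IHn; lra. Qed.

Lemma fsum_scal n c f : fsum n (fun i => c * f i) = c * fsum n f.
Proof. induction n; simpl; [lra|]. rewrite IHn; lra. Qed.

Lemma fsum_mul_r n f c : fsum n f * c = fsum n (fun i => f i * c).
Proof. rewrite Rmult_comm, <- fsum_scal. apply fsum_ext; intros; ring. Qed.

Lemma fsum_zero n : fsum n (fun _ => 0) = 0.
Proof. induction n; simpl; [lra|]. rewrite IHn; lra. Qed.

Lemma fsum_swap n m f :
  fsum n (fun i => fsum m (fun j => f i j)) = fsum m (fun j => fsum n (fun i => f i j)).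
Proof.
  induction n; simpl; [rewrite fsum_zero; auto|].
  rewrite IHn, <- fsum_plus; auto.
Qed.

Lemma fsum_abs n f : Rabs (fsum n f) <= fsum n (fun i => Rabs (f i)).
Proof.
  induction n; simpl; [rewrite Rabs_R0; lra|].
  eapply Rle_trans; [apply Rabs_triang|]. lra.
Qed.

Lemma fsum_le n f g : (forall i, (i < n)%nat -> f i <= g i) -> fsum n f <= fsum n g.
Proof.
  induction n; simpl; intros H; [lra|].
  assert (fsum n f <= fsum n g) by (apply IHn; intros; apply H; lia).
  specialize (H n ltac:(lia)). lra.
Qed.

Lemma fsum_nonneg n f : (forall i, (i < n)%nat -> 0 <= f i) -> 0 <= fsum n f.
Proof. intros H. rewrite <- (fsum_zero n). apply fsum_le; auto. Qed.

Lemma fsum_ge_term n f k : (forall i, (i < n)%nat -> 0 <= f i) -> (k < n)%nat -> f k <= fsum n f.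
Proof.
  induction n; intros H Hk; simpl; [lia|].
  assert (0 <= fsum n f) by (apply fsum_nonneg; intros; apply H; lia).
  destruct (Nat.eq_dec k n) as [->|Hkn]; [lra|].
  assert (f k <= fsum n f) by (apply IHn; [intros; apply H|]; lia).
  specialize (H n ltac:(lia)). lra.
Qed.

(* Coquelicot states these for normed modules, in terms of [scal] and [plus]; the [R]
   instances below rewrite directly with [*] and [+]. *)
Lemma RInt_scalR (f : R -> R) a b k :
  ex_RInt f a b -> RInt (fun x => k * f x) a b = k * RInt f a b.
Proof. exact (RInt_scal f a b k). Qed.

Lemma ex_RInt_scalR (f : R -> R) a b k : ex_RInt f a b -> ex_RInt (fun x => k * f x) a b.
Proof. exact (ex_RInt_scal f a b k). Qed.

Lemma RInt_plusR (f g : R -> R) a b : ex_RInt f a b -> ex_RInt g a b ->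
  RInt (fun x => f x + g x) a b = RInt f a b + RInt g a b.
Proof. exact (RInt_plus f g a b). Qed.

Lemma RInt_minusR (f g : R -> R) a b : ex_RInt f a b -> ex_RInt g a b ->
  RInt (fun x => f x - g x) a b = RInt f a b - RInt g a b.
Proof. exact (RInt_minus f g a b). Qed.

Lemma RInt_constR a b (c : R) : RInt (fun _ => c) a b = (b - a) * c.
Proof. exact (RInt_const a b c). Qed.

Lemma RInt_ChaslesR (f : R -> R) a b c : ex_RInt f a b -> ex_RInt f b c ->
  RInt f a b + RInt f b c = RInt f a c.
Proof. exact (RInt_Chasles f a b c). Qed.

Lemma ex_RInt_fsum n (f : nat -> R -> R) a b :
  (forall i, (i < n)%nat -> ex_RInt (f i) a b) -> ex_RInt (fun s => fsum n (fun i => f i s)) a b.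
Proof.
  induction n; intros H; simpl; [apply ex_RInt_const|].
  apply (ex_RInt_plus (V := R_CompleteNormedModule)); [apply IHn; intros|]; apply H; lia.
Qed.

Lemma RInt_fsum n (f : nat -> R -> R) a b : (forall i, (i < n)%nat -> ex_RInt (f i) a b) ->
  RInt (fun s => fsum n (fun i => f i s)) a b = fsum n (fun i => RInt (f i) a b).
Proof.
  induction n; intros H; simpl; [rewrite RInt_constR; lra|].
  rewrite RInt_plusR, IHn; auto; try (apply ex_RInt_fsum); intros; apply H; lia.
Qed.

Lemma abs_RInt_le_dominated (f h : R -> R) a b : a <= b -> ex_RInt f a b -> ex_RInt h a b ->
  (forall x, a < x < b -> Rabs (f x) <= h x) -> Rabs (RInt f a b) <= RInt h a b.
Proof.
  intros Hab Hf Hh H. apply Rabs_le. split.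
  - rewrite <- (Rmult_1_l (RInt h a b)), Ropp_mult_distr_l, <- RInt_scalR by auto.
    apply RInt_le; auto; [now apply ex_RInt_scalR|].
    intros x Hx. specialize (H x Hx). apply Rabs_le_between in H. lra.
  - apply RInt_le; auto. intros x Hx. specialize (H x Hx). apply Rabs_le_between in H. lra.
Qed.

(** * Trilinear forms and sign vectors *)

Definition tri n (A : nat -> nat -> nat -> R) (r s t : nat -> R) : R :=
  fsum n (fun i => fsum n (fun j => fsum n (fun k => A i j k * r i * s j * t k))).

Definition unit_vec (r : nat -> R) : Prop := forall i, Rabs (r i) <= 1.

Definition trilinear_bound n A M : Prop :=
  forall r s t, unit_vec r -> unit_vec s -> unit_vec t -> Rabs (tri n A r s t) <= M.

Lemma tri_scal n c B r s t : tri n (fun i j k => c * B i j k) r s t = c * tri n B r s t.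
Proof.
  unfold tri. rewrite <- fsum_scal. apply fsum_ext; intros i _.
  rewrite <- fsum_scal. apply fsum_ext; intros j _.
  rewrite <- fsum_scal. apply fsum_ext; intros k _. ring.
Qed.

Lemma tri_abs_le n A r s t : unit_vec r -> unit_vec s -> unit_vec t ->
  Rabs (tri n A r s t) <= fsum n (fun i => fsum n (fun j => fsum n (fun k => Rabs (A i j k)))).
Proof.
  intros Hr Hs Ht. eapply Rle_trans; [apply fsum_abs|].
  apply fsum_le; intros i _. eapply Rle_trans; [apply fsum_abs|].
  apply fsum_le; intros j _. eapply Rle_trans; [apply fsum_abs|].
  apply fsum_le; intros k _. rewrite !Rabs_mult.
  specialize (Hr i). specialize (Hs j). specialize (Ht k).
  pose proof (Rabs_pos (A i j k)). pose proof (Rabs_pos (r i)).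
  pose proof (Rabs_pos (s j)). pose proof (Rabs_pos (t k)).
  assert (Rabs (r i) * Rabs (s j) <= 1) by nra.
  assert (Rabs (r i) * Rabs (s j) * Rabs (t k) <= 1) by nra.
  replace (Rabs (A i j k) * Rabs (r i) * Rabs (s j) * Rabs (t k))
    with (Rabs (A i j k) * (Rabs (r i) * Rabs (s j) * Rabs (t k))) by ring. nra.
Qed.

Definition sign_of (x : R) : bool := if Rle_dec 0 x then true else false.

Lemma mul_sgn_sign_of x : x * sgn (sign_of x) = Rabs x.
Proof.
  unfold sign_of, sgn. destruct (Rle_dec 0 x).
  - rewrite Rabs_right by lra. ring.
  - rewrite Rabs_left by lra. ring.
Qed.

Lemma unit_vec_sgn (r : nat -> bool) : unit_vec (fun i => sgn (r i)).
Proof. intros i. unfold sgn, Rabs. destruct (r i), Rcase_abs; lra. Qed.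

Lemma linear_le_sign n c r : unit_vec r ->
  Rabs (fsum n (fun i => c i * r i)) <= Rabs (fsum n (fun i => c i * sgn (sign_of (c i)))).
Proof.
  intros Hr.
  rewrite (fsum_ext n (fun i => c i * sgn (sign_of (c i))) (fun i => Rabs (c i)))
    by (intros; apply mul_sgn_sign_of).
  rewrite (Rabs_right (fsum n (fun i => Rabs (c i)))) by (apply Rle_ge, fsum_nonneg; intros; apply Rabs_pos).
  eapply Rle_trans; [apply fsum_abs|].
  apply fsum_le. intros i _. rewrite Rabs_mult.
  specialize (Hr i). pose proof (Rabs_pos (c i)). pose proof (Rabs_pos (r i)). nra.
Qed.

Lemma tri_r n A r s t :
  tri n A r s t = fsum n (fun i => fsum n (fun j => fsum n (fun k => A i j k * s j * t k)) * r i).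
Proof.
  unfold tri. apply fsum_ext; intros i _. rewrite fsum_mul_r. apply fsum_ext; intros j _.
  rewrite fsum_mul_r. apply fsum_ext; intros k _. ring.
Qed.

Lemma tri_s n A r s t :
  tri n A r s t = fsum n (fun j => fsum n (fun i => fsum n (fun k => A i j k * r i * t k)) * s j).
Proof.
  unfold tri. rewrite fsum_swap. apply fsum_ext; intros j _. rewrite fsum_mul_r.
  apply fsum_ext; intros i _. rewrite fsum_mul_r. apply fsum_ext; intros k _. ring.
Qed.

Lemma tri_t n A r s t :
  tri n A r s t = fsum n (fun k => fsum n (fun i => fsum n (fun j => A i j k * r i * s j)) * t k).
Proof.
  unfold tri. rewrite (fsum_ext n _ (fun i => fsum n (fun k => fsum n (fun j =>
    A i j k * r i * s j * t k)))) by (intros; apply fsum_swap).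
  rewrite fsum_swap. apply fsum_ext; intros k _. rewrite fsum_mul_r.
  apply fsum_ext; intros i _. rewrite fsum_mul_r. apply fsum_ext; intros j _. ring.
Qed.

Lemma trilinear_bound_of_signs n A M :
  (forall r s t : nat -> bool,
     Rabs (tri n A (fun i => sgn (r i)) (fun j => sgn (s j)) (fun k => sgn (t k))) <= M) ->
  trilinear_bound n A M.
Proof.
  intros H r s t Hr Hs Ht.
  rewrite tri_r. eapply Rle_trans; [apply linear_le_sign; auto|].
  set (r' := fun i => sign_of (fsum n (fun j => fsum n (fun k => A i j k * s j * t k)))).
  change (Rabs (fsum n (fun i => fsum n (fun j => fsum n (fun k => A i j k * s j * t k))
    * sgn (r' i))) <= M).
  rewrite <- tri_r, tri_s. eapply Rle_trans; [apply linear_le_sign; auto|].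
  set (s' := fun j => sign_of (fsum n (fun i => fsum n (fun k => A i j k * sgn (r' i) * t k)))).
  change (Rabs (fsum n (fun j => fsum n (fun i => fsum n (fun k => A i j k * sgn (r' i) * t k))
    * sgn (s' j))) <= M).
  rewrite <- tri_s, tri_t. eapply Rle_trans; [apply linear_le_sign; auto|].
  set (t' := fun k => sign_of (fsum n (fun i => fsum n (fun j =>
    A i j k * sgn (r' i) * sgn (s' j))))).
  change (Rabs (fsum n (fun k => fsum n (fun i => fsum n (fun j =>
    A i j k * sgn (r' i) * sgn (s' j))) * sgn (t' k))) <= M).
  rewrite <- tri_t. apply H.
Qed.

(* [S_ijik] and [S_ijjk] are convertible to instances of [sign_sup]. *)
Definition sign_sup n c B : R :=
  real (Lub_Rbar (fun v => exists r s t : nat -> bool,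
    v = Rabs (c * tri n B (fun i => sgn (r i)) (fun j => sgn (s j)) (fun k => sgn (t k))))).

Lemma le_real_Lub_Rbar (E : R -> Prop) B v :
  (forall w, E w -> w <= B) -> E v -> v <= real (Lub_Rbar E).
Proof.
  intros HB Hv. destruct (Lub_Rbar_correct E) as [Hub Hl].
  assert (H1 : Rbar_le v (Lub_Rbar E)) by (apply Hub; auto).
  assert (H2 : Rbar_le (Lub_Rbar E) B) by (apply Hl; intros w Hw; apply HB; auto).
  destruct (Lub_Rbar E); simpl in *; auto; contradiction.
Qed.

Lemma sign_sup_spec n c B :
  trilinear_bound n (fun i j k => c * B i j k) (sign_sup n c B) /\ 0 <= sign_sup n c B.
Proof.
  assert (Hs : forall r s t : nat -> bool, Rabs (c * tri n B (fun i => sgn (r i))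
    (fun j => sgn (s j)) (fun k => sgn (t k))) <= sign_sup n c B).
  { intros r s t. apply (le_real_Lub_Rbar _
      (Rabs c * fsum n (fun i => fsum n (fun j => fsum n (fun k => Rabs (B i j k)))))).
    - intros w [r' [s' [t' ->]]]. rewrite Rabs_mult.
      apply Rmult_le_compat_l; [apply Rabs_pos|]. apply tri_abs_le; apply unit_vec_sgn.
    - exists r, s, t. reflexivity. }
  split.
  - apply trilinear_bound_of_signs. intros r s t. rewrite tri_scal. apply Hs.
  - eapply Rle_trans; [apply Rabs_pos|]. apply (Hs (fun _ => true) (fun _ => true) (fun _ => true)).
Qed.

(** * Continuity and integrals on the square *)

Local Notation twoPI := (2 * PI).

Lemma twoPI_pos : 0 < twoPI.
Proof. pose proof PI_RGT_0; lra. Qed.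

Lemma continuous_of_eps (f : R -> R) x :
  (forall eps, 0 < eps -> exists d, 0 < d /\
     forall y, Rabs (y - x) < d -> Rabs (f y - f x) < eps) ->
  continuous f x.
Proof.
  intros H. apply continuity_pt_filterlim. intros eps Heps.
  destruct (H eps Heps) as [d [Hd Hy]]. exists d. split; [lra|].
  intros y [_ Hyd]. apply Hy. exact Hyd.
Qed.

Definition C2 (φ : R -> R -> R) : Prop := forall s t, continuity_2d_pt φ s t.

Lemma C2_of_continuous2 f : continuous2 f -> C2 f.
Proof. intros H s t. apply continuity_2d_pt_filterlim. apply H. Qed.

Lemma continuity_2d_pt_slice2 φ s t : continuity_2d_pt φ s t -> continuous (fun t => φ s t) t.
Proof.
  intros H. apply continuous_of_eps. intros eps Heps.
  destruct (H (mkposreal eps Heps)) as [d Hd]. exists d. split; [apply cond_pos|].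
  intros y Hy. apply Hd; auto. rewrite Rminus_diag, Rabs_R0. apply cond_pos.
Qed.

Lemma continuity_2d_pt_slice1 φ s t : continuity_2d_pt φ s t -> continuous (fun s => φ s t) s.
Proof.
  intros H. apply continuous_of_eps. intros eps Heps.
  destruct (H (mkposreal eps Heps)) as [d Hd]. exists d. split; [apply cond_pos|].
  intros y Hy. apply Hd; auto. rewrite Rminus_diag, Rabs_R0. apply cond_pos.
Qed.

Lemma C2_abs φ : C2 φ -> C2 (fun s t => Rabs (φ s t)).
Proof.
  intros H s t. apply (continuity_1d_2d_pt_comp Rabs φ); auto.
  apply continuity_pt_filterlim, continuous_Rabs.
Qed.

Lemma C2_sqr φ : C2 φ -> C2 (fun s t => (φ s t) ^ 2).
Proof.
  intros H s t. apply (continuity_2d_pt_ext (fun s t => φ s t * φ s t)); [intros; ring|].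
  apply continuity_2d_pt_mult; auto.
Qed.

Lemma C2_of_continuous_snd (u : R -> R) : (forall t, continuous u t) -> C2 (fun _ t => u t).
Proof.
  intros H s t. apply (continuity_1d_2d_pt_comp u (fun _ v => v)).
  - apply continuity_pt_filterlim, H.
  - apply continuity_2d_pt_id2.
Qed.

Lemma ex_RInt_continuousR (f : R -> R) a b : (forall x, continuous f x) -> ex_RInt f a b.
Proof. intros H. apply (ex_RInt_continuous (V := R_CompleteNormedModule)). intros; apply H. Qed.

Lemma continuous_RInt_param (φ : R -> R -> R) a b s0 : a <= b -> C2 φ ->
  continuous (fun s => RInt (fun t => φ s t) a b) s0.
Proof.
  intros Hab Hc. apply continuous_of_eps. intros eps Heps.
  set (e' := eps / (b - a + 1)).
  assert (He' : 0 < e') by (unfold e'; apply Rdiv_lt_0_compat; lra).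
  destruct (uniform_continuity_2d_1d' φ a b s0 (fun x _ => Hc s0 x) (mkposreal e' He'))
    as [d Hd].
  exists d. split; [apply cond_pos|]. intros y Hy.
  assert (Ex : forall s, ex_RInt (fun t => φ s t) a b)
    by (intros; apply ex_RInt_continuousR; intros; apply continuity_2d_pt_slice2, Hc).
  rewrite <- RInt_minusR by auto.
  apply Rle_lt_trans with ((b - a) * e').
  - apply abs_RInt_le_const; auto; [apply (ex_RInt_minus (V := R_CompleteNormedModule)); auto|].
    intros t Ht. left. pose proof (cond_pos d). apply (Hd t s0 t y); try lra.
    + apply Rabs_lt_between' in Hy. lra.
    + rewrite Rminus_diag, Rabs_R0; apply cond_pos.
  - unfold e'. apply Rmult_lt_reg_r with (b - a + 1); [lra|]. field_simplify; lra.
Qed.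

Lemma ex_int_T2 φ : C2 φ -> ex_RInt (fun s => RInt (fun t => φ s t) 0 twoPI) 0 twoPI.
Proof.
  intros H. pose proof twoPI_pos.
  apply ex_RInt_continuousR. intros; apply continuous_RInt_param; auto; lra.
Qed.

Lemma int_T2_nonneg φ : C2 φ -> (forall s t, 0 <= φ s t) -> 0 <= int_T2 φ.
Proof.
  intros H Hp. pose proof twoPI_pos. apply RInt_ge_0; [lra|apply ex_int_T2; auto|].
  intros x _. apply RInt_ge_0; [lra| |auto].
  apply ex_RInt_continuousR. intros; apply continuity_2d_pt_slice2; auto.
Qed.

(** * Kernel representation on the circle *)

Definition piecewise_unit_kernel (k : R -> R) : Prop :=
  (forall t, 0 <= t <= twoPI -> Rabs (k t) <= 1) /\
  exists c u v, 0 <= c <= twoPI /\ (forall t, continuous u t) /\ (forall t, continuous v t) /\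
    (forall t, 0 < t < c -> k t = u t) /\ (forall t, c < t < twoPI -> k t = v t).

Lemma ex_RInt_kernel k f : piecewise_unit_kernel k -> (forall t, continuous f t) ->
  ex_RInt (fun t => k t * f t) 0 twoPI.
Proof.
  intros [_ [c [u [v [Hc [Hu [Hv [E1 E2]]]]]]]] Hf.
  apply ex_RInt_Chasles with c.
  - apply ex_RInt_ext with (fun t => u t * f t).
    + intros x Hx. rewrite Rmin_left, Rmax_right in Hx by lra. rewrite E1; auto.
    + apply ex_RInt_continuousR. intros; apply (continuous_mult u f); auto.
  - apply ex_RInt_ext with (fun t => v t * f t).
    + intros x Hx. rewrite Rmin_left, Rmax_right in Hx by lra. rewrite E2; auto.
    + apply ex_RInt_continuousR. intros; apply (continuous_mult v f); auto.
Qed.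

Lemma continuous_RInt_kernel k φ s0 : piecewise_unit_kernel k -> C2 φ ->
  continuous (fun s => RInt (fun t => k t * φ s t) 0 twoPI) s0.
Proof.
  intros Hk Hφ. pose proof Hk as [_ [c [u [v [Hc [Hu [Hv [E1 E2]]]]]]]].
  apply continuous_ext with
    (fun s => RInt (fun t => u t * φ s t) 0 c + RInt (fun t => v t * φ s t) c twoPI).
  - intros s.
    assert (HI : ex_RInt (fun t => k t * φ s t) 0 twoPI)
      by (apply ex_RInt_kernel; auto; intros; apply continuity_2d_pt_slice2; auto).
    rewrite <- (RInt_ChaslesR (fun t => k t * φ s t) 0 c twoPI).
    2: apply (ex_RInt_Chasles_1 (V := R_CompleteNormedModule) _ 0 c twoPI); [lra|exact HI].
    2: apply (ex_RInt_Chasles_2 (V := R_CompleteNormedModule) _ 0 c twoPI); [lra|exact HI].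
    f_equal; apply RInt_ext; intros x Hx; rewrite Rmin_left, Rmax_right in Hx by lra.
    + rewrite E1; auto.
    + rewrite E2; auto.
  - apply (continuous_plus (fun s => RInt (fun t => u t * φ s t) 0 c)
      (fun s => RInt (fun t => v t * φ s t) c twoPI));
    apply continuous_RInt_param; try lra;
    intros s t; apply continuity_2d_pt_mult; auto; apply C2_of_continuous_snd; auto.
Qed.

Lemma RInt_kernel_scal (α : R) b φ s : piecewise_unit_kernel b -> C2 φ ->
  RInt (fun t => α * b t * φ s t) 0 twoPI = α * RInt (fun t => b t * φ s t) 0 twoPI.
Proof.
  intros Hb Hφ. rewrite <- RInt_scalR.
  - apply RInt_ext; intros; simpl; ring.
  - apply ex_RInt_kernel; auto; intros; apply continuity_2d_pt_slice2; auto.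
Qed.

Lemma ex_RInt_kernel_scal (α : R) b φ s : piecewise_unit_kernel b -> C2 φ ->
  ex_RInt (fun t => α * b t * φ s t) 0 twoPI.
Proof.
  intros Hb Hφ. apply ex_RInt_ext with (fun t => α * (b t * φ s t)); [intros; simpl; ring|].
  apply ex_RInt_scalR, ex_RInt_kernel; auto; intros; apply continuity_2d_pt_slice2; auto.
Qed.

Lemma ex_int_T2_kernels a b φ : piecewise_unit_kernel a -> piecewise_unit_kernel b -> C2 φ ->
  ex_RInt (fun s => RInt (fun t => a s * b t * φ s t) 0 twoPI) 0 twoPI.
Proof.
  intros Ha Hb Hφ.
  apply ex_RInt_ext with (fun s => a s * RInt (fun t => b t * φ s t) 0 twoPI).
  - intros s _. rewrite RInt_kernel_scal; auto.
  - apply ex_RInt_kernel; auto. intros; apply continuous_RInt_kernel; auto.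
Qed.

Definition mean_kernel (t : R) : R := / twoPI.

(* The Green kernel of d/dt on the circle: [f y - mean f = RInt (green_kernel y * f')]. *)
Definition green_kernel (y t : R) : R := if Rlt_dec t y then t / twoPI else t / twoPI - 1.

Lemma continuous_ramp x : continuous (fun t => t / twoPI) x.
Proof.
  apply (continuous_mult (fun t : R => t) (fun _ => / twoPI));
    [apply continuous_id|apply continuous_const].
Qed.

Lemma continuous_ramp_plus b t : continuous (fun t => t / twoPI + b) t.
Proof.
  apply (continuous_plus (fun t => t / twoPI) (fun _ => b));
    [apply continuous_ramp|apply continuous_const].
Qed.

Lemma mean_kernel_unit : piecewise_unit_kernel mean_kernel.
Proof.
  pose proof twoPI_pos. pose proof PI2_3_2. split.
  - intros t _. unfold mean_kernel.
    rewrite Rabs_right by (apply Rle_ge, Rlt_le, Rinv_0_lt_compat; lra).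
    rewrite <- Rinv_1. apply Rinv_le_contravar; lra.
  - exists 0, (fun _ => / twoPI), (fun _ => / twoPI).
    repeat split; try lra; intros; apply continuous_const.
Qed.

Lemma green_kernel_unit y : 0 <= y <= twoPI -> piecewise_unit_kernel (green_kernel y).
Proof.
  intros Hy. pose proof twoPI_pos. split.
  - intros t Ht. assert (0 <= t / twoPI <= 1).
    { split; [apply Rdiv_le_0_compat; lra|].
      apply Rmult_le_reg_r with twoPI; auto. unfold Rdiv. rewrite Rmult_assoc, Rinv_l; lra. }
    unfold green_kernel. destruct (Rlt_dec t y); apply Rabs_le; lra.
  - exists y, (fun t => t / twoPI + 0), (fun t => t / twoPI + -1).
    repeat split; try lra; intros; try apply continuous_ramp_plus;
      unfold green_kernel; destruct (Rlt_dec t y); try ring; lra.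
Qed.

Lemma RInt_ramp_mul_derive (f df : R -> R) :
  (forall x, is_derive f x (df x)) -> (forall x, continuous df x) ->
  RInt (fun t => t / twoPI * df t) 0 twoPI
  = f twoPI - RInt (fun t => mean_kernel t * f t) 0 twoPI.
Proof.
  intros Hd Hc. pose proof twoPI_pos.
  assert (Hfc : forall x, continuous f x)
    by (intros; apply (ex_derive_continuous (K := R_AbsRing) (V := R_NormedModule));
        eexists; apply Hd).
  assert (Hmean : forall x, continuous (fun t => mean_kernel t * f t) x)
    by (intros; apply (continuous_mult (fun _ => / twoPI) f); [apply continuous_const|auto]).
  assert (Hramp : forall x, continuous (fun t => t / twoPI * df t) x)
    by (intros; apply (continuous_mult (fun t => t / twoPI) df); auto using continuous_ramp).
  assert (HI : is_RInt (fun t => mean_kernel t * f t + t / twoPI * df t) 0 twoPI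
                 (minus (twoPI / twoPI * f twoPI) (0 / twoPI * f 0))).
  { apply (is_RInt_derive (fun t => t / twoPI * f t)).
    - intros x _. apply (is_derive_mult (fun t => t / twoPI) f); [|auto|apply Rmult_comm].
      pose proof (is_derive_scal (fun t => t) x (/ twoPI) 1 (is_derive_id (K := R_AbsRing) x))
        as Hid.
      rewrite Rmult_1_r in Hid.
      apply (is_derive_ext (fun t => / twoPI * t)); [intros; simpl; unfold Rdiv; ring|exact Hid].
    - intros x _. apply (continuous_plus (fun t => mean_kernel t * f t)); auto. }
  apply (is_RInt_unique (V := R_CompleteNormedModule)) in HI.
  rewrite RInt_plusR in HI by (apply ex_RInt_continuousR; auto).
  replace (minus (twoPI / twoPI * f twoPI) (0 / twoPI * f 0)) with (f twoPI) in HI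
    by (unfold minus, plus, opp; simpl; field; lra).
  lra.
Qed.

Lemma representation_1d (f df : R -> R) y :
  (forall x, is_derive f x (df x)) -> (forall x, continuous df x) -> 0 <= y <= twoPI ->
  f y = RInt (fun t => mean_kernel t * f t) 0 twoPI
        + RInt (fun t => green_kernel y t * df t) 0 twoPI.
Proof.
  intros Hd Hc Hy. pose proof twoPI_pos.
  assert (Ex_ramp : forall a b, ex_RInt (fun t => t / twoPI * df t) a b)
    by (intros; apply ex_RInt_continuousR; intros;
        apply (continuous_mult (fun t => t / twoPI) df); auto using continuous_ramp).
  assert (Ftc : RInt df y twoPI = f twoPI - f y)
    by (apply is_RInt_unique, (is_RInt_derive f df); intros; auto).
  assert (Ex_green : ex_RInt (fun t => green_kernel y t * df t) 0 twoPI)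
    by (apply ex_RInt_kernel; auto; apply green_kernel_unit; auto).
  rewrite <- (RInt_ChaslesR (fun t => green_kernel y t * df t) 0 y twoPI).
  2: apply (ex_RInt_Chasles_1 (V := R_CompleteNormedModule) _ 0 y twoPI); [lra|exact Ex_green].
  2: apply (ex_RInt_Chasles_2 (V := R_CompleteNormedModule) _ 0 y twoPI); [lra|exact Ex_green].
  rewrite (RInt_ext (fun t => green_kernel y t * df t) (fun t => t / twoPI * df t) 0 y).
  2:{ intros x Hx. rewrite Rmin_left, Rmax_right in Hx by lra.
      unfold green_kernel. destruct (Rlt_dec x y); [auto|lra]. }
  rewrite (RInt_ext (fun t => green_kernel y t * df t)
    (fun t => t / twoPI * df t - df t) y twoPI).
  2:{ intros x Hx. rewrite Rmin_left, Rmax_right in Hx by lra.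
      unfold green_kernel. destruct (Rlt_dec x y); [lra|simpl; ring]. }
  rewrite RInt_minusR, Ftc by (auto; apply ex_RInt_continuousR; auto).
  pose proof (RInt_ChaslesR (fun t => t / twoPI * df t) 0 y twoPI (Ex_ramp _ _) (Ex_ramp _ _)).
  pose proof (RInt_ramp_mul_derive f df Hd Hc).
  lra.
Qed.

Lemma RInt_kernel_representation a g b φ1 φ2 :
  piecewise_unit_kernel a -> piecewise_unit_kernel b -> C2 φ1 -> C2 φ2 ->
  (forall s, g s = RInt (fun t => mean_kernel t * φ1 s t) 0 twoPI
                   + RInt (fun t => b t * φ2 s t) 0 twoPI) ->
  RInt (fun s => a s * g s) 0 twoPI
  = int_T2 (fun s t => a s * mean_kernel t * φ1 s t) + int_T2 (fun s t => a s * b t * φ2 s t).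
Proof.
  intros Ha Hb H1 H2 Hg. unfold int_T2.
  rewrite <- RInt_plusR by (apply ex_int_T2_kernels; auto using mean_kernel_unit).
  apply RInt_ext. intros s _.
  rewrite Hg, !RInt_kernel_scal by auto using mean_kernel_unit. simpl; ring.
Qed.

Definition mixed_regular (F : R -> R -> R) : Prop :=
  (forall s t, ex_derive (fun z => F z t) s) /\
  (forall s t, ex_derive (fun z => F s z) t) /\
  (forall s t, ex_derive (fun z => pdir true F s z) t) /\
  C2 F /\ C2 (pdir true F) /\ C2 (pdir false F) /\ C2 (pdir false (pdir true F)) /\
  periodic2 F.

Lemma representation_2d F x y : mixed_regular F -> 0 <= x <= twoPI -> 0 <= y <= twoPI ->
  F x y = int_T2 (fun s t => mean_kernel s * mean_kernel t * F s t)
        + int_T2 (fun s t => mean_kernel s * green_kernel y t * pdir false F s t)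
        + int_T2 (fun s t => green_kernel x s * mean_kernel t * pdir true F s t)
        + int_T2 (fun s t => green_kernel x s * green_kernel y t * pdir false (pdir true F) s t).
Proof.
  intros [D1 [D2 [D3 [C0 [Cx [Cy [Cyx _]]]]]]] Hx Hy.
  rewrite (representation_1d (fun z => F z y) (fun z => pdir true F z y) x); auto.
  2:{ intros; apply Derive_correct; auto. }
  2:{ intros; apply continuity_2d_pt_slice1; auto. }
  rewrite (RInt_kernel_representation mean_kernel (fun s => F s y) (green_kernel y) F
    (pdir false F)), (RInt_kernel_representation (green_kernel x) (fun s => pdir true F s y)
    (green_kernel y) (pdir true F) (pdir false (pdir true F)));
    auto using mean_kernel_unit, green_kernel_unit; [ring| |];
    intros s; apply representation_1d; auto;
    intros; try apply Derive_correct; auto; apply continuity_2d_pt_slice2; auto.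
Qed.

(** * Bilinear sums of a periodic function *)

Definition reduce_period (x : R) : R := x + IZR (1 - up (x / twoPI)) * twoPI.

Lemma reduce_period_range x : 0 <= reduce_period x <= twoPI.
Proof.
  unfold reduce_period. pose proof twoPI_pos. destruct (archimed (x / twoPI)) as [H1 H2].
  rewrite minus_IZR.
  assert (x = (x / twoPI) * twoPI) by (field; lra).
  set (u := IZR (up (x / twoPI))) in *. set (r := x / twoPI) in *.
  split; nra.
Qed.

Lemma periodic_shift_Z (f : R -> R) x : (forall z, f (z + twoPI) = f z) ->
  forall k : Z, f (x + IZR k * twoPI) = f x.
Proof.
  intros Hp k. induction k using Z.peano_ind.
  - f_equal; simpl; ring.
  - rewrite succ_IZR, <- IHk, <- (Hp (x + IZR k * twoPI)). f_equal. ring.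
  - rewrite <- IHk, <- (Hp (x + IZR (Z.pred k) * twoPI)), <- Z.sub_1_r, minus_IZR.
    f_equal. ring.
Qed.

Lemma periodic2_reduce F x y : periodic2 F -> F (reduce_period x) (reduce_period y) = F x y.
Proof.
  intros Hp. unfold reduce_period.
  rewrite (periodic_shift_Z (fun z => F z _)), (periodic_shift_Z (fun z => F x z));
    auto; intros; apply Hp.
Qed.

Definition bilinear_bound n (W : nat -> nat -> R) M : Prop :=
  forall p q, unit_vec p -> unit_vec q ->
  Rabs (fsum n (fun i => fsum n (fun j => W i j * p i * q j))) <= M.

(* Pointwise in [(s, t)] the sum is [W] paired with the unit vectors [(a i s)_i], [(b j t)_j]. *)
Lemma bilinear_kernel_int_bound n W a b φ M :
  (forall i, piecewise_unit_kernel (a i)) -> (forall j, piecewise_unit_kernel (b j)) -> C2 φ ->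
  bilinear_bound n W M ->
  Rabs (fsum n (fun i => fsum n (fun j => W i j * int_T2 (fun s t => a i s * b j t * φ s t))))
  <= M * int_T2 (fun s t => Rabs (φ s t)).
Proof.
  intros Ha Hb Hφ HW. pose proof twoPI_pos. unfold int_T2.
  assert (Habs : C2 (fun s t => Rabs (φ s t))) by (apply C2_abs; auto).
  assert (Hinner : forall s i j, ex_RInt (fun t => W i j * a i s * b j t * φ s t) 0 twoPI)
    by (intros; apply ex_RInt_kernel_scal; auto).
  assert (Houter : forall i j, ex_RInt (fun s => W i j
      * RInt (fun t => a i s * b j t * φ s t) 0 twoPI) 0 twoPI)
    by (intros; apply ex_RInt_scalR, ex_int_T2_kernels; auto).
  rewrite (fsum_ext n _ (fun i => RInt (fun s => fsum n (fun j => W i j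
    * RInt (fun t => a i s * b j t * φ s t) 0 twoPI)) 0 twoPI)).
  2:{ intros i _. rewrite RInt_fsum by auto. apply fsum_ext; intros j _.
      rewrite RInt_scalR; auto. apply ex_int_T2_kernels; auto. }
  rewrite <- RInt_fsum by (intros; apply ex_RInt_fsum; auto).
  rewrite <- RInt_scalR by (apply ex_int_T2; auto).
  apply abs_RInt_le_dominated; [lra|apply ex_RInt_fsum; intros; apply ex_RInt_fsum; auto|
    apply ex_RInt_scalR, ex_int_T2; auto|].
  intros s Hs.
  rewrite (fsum_ext n _ (fun i => RInt (fun t => fsum n (fun j =>
    W i j * a i s * b j t * φ s t)) 0 twoPI)).
  2:{ intros i _. rewrite RInt_fsum by auto. apply fsum_ext; intros j _.
      rewrite <- RInt_scalR by (apply ex_RInt_kernel_scal; auto).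
      apply RInt_ext; intros; simpl; ring. }
  rewrite <- RInt_fsum by (intros; apply ex_RInt_fsum; auto).
  rewrite <- RInt_scalR by (apply ex_RInt_continuousR; intros;
    apply (continuity_2d_pt_slice2 (fun s t => Rabs (φ s t))); auto).
  apply abs_RInt_le_dominated; [lra|apply ex_RInt_fsum; intros; apply ex_RInt_fsum; auto|
    apply ex_RInt_scalR, ex_RInt_continuousR; intros;
    apply (continuity_2d_pt_slice2 (fun s t => Rabs (φ s t))); auto|].
  intros t Ht.
  rewrite (fsum_ext n _ (fun i => fsum n (fun j => W i j * a i s * b j t) * φ s t)).
  2:{ intros i _. rewrite fsum_mul_r. apply fsum_ext; intros; ring. }
  rewrite <- fsum_mul_r, Rabs_mult.
  apply Rmult_le_compat_r; [apply Rabs_pos|].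
  apply HW; intros i; [apply (proj1 (Ha i))|apply (proj1 (Hb i))]; lra.
Qed.

Definition mixed_norm (F : R -> R -> R) : R :=
  int_T2 (fun s t => Rabs (F s t)) + int_T2 (fun s t => Rabs (pdir false F s t))
  + int_T2 (fun s t => Rabs (pdir true F s t))
  + int_T2 (fun s t => Rabs (pdir false (pdir true F) s t)).

Lemma mixed_norm_nonneg F : mixed_regular F -> 0 <= mixed_norm F.
Proof.
  intros [_ [_ [_ [C0 [Cx [Cy [Cyx _]]]]]]]. unfold mixed_norm.
  assert (H : forall φ, C2 φ -> 0 <= int_T2 (fun s t => Rabs (φ s t)))
    by (intros; apply int_T2_nonneg; [apply C2_abs; auto|intros; apply Rabs_pos]).
  pose proof (H F C0). pose proof (H _ Cx). pose proof (H _ Cy). pose proof (H _ Cyx). lra.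
Qed.

Lemma bilinear_mixed_norm_bound n W (x y : nat -> R) F M : mixed_regular F -> bilinear_bound n W M ->
  Rabs (fsum n (fun i => fsum n (fun j => W i j * F (x i) (y j)))) <= M * mixed_norm F.
Proof.
  intros HF HW. pose proof HF as [_ [_ [_ [C0 [Cx [Cy [Cyx Hp]]]]]]].
  set (T := fun (a b : nat -> R -> R) φ => fsum n (fun i => fsum n (fun j =>
     W i j * int_T2 (fun s t => a i s * b j t * φ s t)))).
  assert (Hsum : fsum n (fun i => fsum n (fun j => W i j * F (x i) (y j))) =
    T (fun _ => mean_kernel) (fun _ => mean_kernel) F
    + T (fun _ => mean_kernel) (fun j => green_kernel (reduce_period (y j))) (pdir false F)
    + T (fun i => green_kernel (reduce_period (x i))) (fun _ => mean_kernel) (pdir true F)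
    + T (fun i => green_kernel (reduce_period (x i))) (fun j => green_kernel (reduce_period (y j)))
        (pdir false (pdir true F))).
  { unfold T. rewrite <- !fsum_plus. apply fsum_ext; intros i _.
    rewrite <- !fsum_plus. apply fsum_ext; intros j _.
    rewrite <- (periodic2_reduce F (x i) (y j)) by auto.
    rewrite (representation_2d F (reduce_period (x i)) (reduce_period (y j)))
      by (auto using reduce_period_range).
    ring. }
  assert (Hmean : forall _ : nat, piecewise_unit_kernel mean_kernel) by (intros; apply mean_kernel_unit).
  assert (Hx : forall i, piecewise_unit_kernel (green_kernel (reduce_period (x i))))
    by (intros; apply green_kernel_unit, reduce_period_range).
  assert (Hy : forall j, piecewise_unit_kernel (green_kernel (reduce_period (y j))))
    by (intros; apply green_kernel_unit, reduce_period_range).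
  rewrite Hsum. unfold mixed_norm.
  assert (B : forall a b φ, (forall i, piecewise_unit_kernel (a i)) ->
      (forall j, piecewise_unit_kernel (b j)) -> C2 φ ->
      Rabs (T a b φ) <= M * int_T2 (fun s t => Rabs (φ s t)))
    by (intros; apply bilinear_kernel_int_bound; auto).
  pose proof (B _ _ F Hmean Hmean C0). pose proof (B _ _ (pdir false F) Hmean Hy Cy).
  pose proof (B _ _ (pdir true F) Hx Hmean Cx).
  pose proof (B _ _ (pdir false (pdir true F)) Hx Hy Cyx).
  match goal with |- Rabs (?a + ?b + ?c + ?d) <= _ =>
    pose proof (Rabs_triang (a + b + c) d); pose proof (Rabs_triang (a + b) c);
    pose proof (Rabs_triang a b) end.
  lra.
Qed.

Lemma mul_unit_vec (a b : nat -> R) : unit_vec a -> unit_vec b -> unit_vec (fun i => a i * b i).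
Proof.
  intros Ha Hb i. rewrite Rabs_mult.
  specialize (Ha i). specialize (Hb i). pose proof (Rabs_pos (a i)). pose proof (Rabs_pos (b i)). nra.
Qed.

Lemma trilinear_ijik_partial_bound n A (x : nat -> R) G M a b :
  mixed_regular G -> trilinear_bound n A M -> unit_vec a -> unit_vec b ->
  Rabs (fsum n (fun i => fsum n (fun j => fsum n (fun k => A i j k * a i * b j * G (x i) (x k)))))
  <= M * mixed_norm G.
Proof.
  intros HG HT Ha Hb.
  rewrite (fsum_ext n _ (fun i => fsum n (fun k =>
    fsum n (fun j => A i j k * a i * b j) * G (x i) (x k)))).
  2:{ intros i _. rewrite fsum_swap. apply fsum_ext; intros k _.
      rewrite fsum_mul_r. apply fsum_ext; intros; ring. }
  apply bilinear_mixed_norm_bound; auto. intros p q Hp Hq.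
  replace (fsum n (fun i => fsum n (fun k => fsum n (fun j => A i j k * a i * b j) * p i * q k)))
    with (tri n A (fun i => a i * p i) b q) by
    (unfold tri; apply fsum_ext; intros i _; rewrite fsum_swap; apply fsum_ext; intros k _;
     rewrite Rmult_assoc, fsum_mul_r; apply fsum_ext; intros; ring).
  apply HT; auto using mul_unit_vec.
Qed.

Lemma trilinear_ijik_bound n A (x : nat -> R) F G M :
  mixed_regular F -> mixed_regular G -> trilinear_bound n A M ->
  Rabs (fsum n (fun i => fsum n (fun j => fsum n (fun k => A i j k * F (x i) (x j) * G (x i) (x k)))))
  <= M * mixed_norm G * mixed_norm F.
Proof.
  intros HF HG HT.
  rewrite (fsum_ext n _ (fun i => fsum n (fun j =>
    fsum n (fun k => A i j k * G (x i) (x k)) * F (x i) (x j)))).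
  2:{ intros i _. apply fsum_ext; intros j _. rewrite fsum_mul_r. apply fsum_ext; intros; ring. }
  apply bilinear_mixed_norm_bound; auto. intros p q Hp Hq.
  replace (fsum n (fun i => fsum n (fun j => fsum n (fun k => A i j k * G (x i) (x k)) * p i * q j)))
    with (fsum n (fun i => fsum n (fun j => fsum n (fun k => A i j k * p i * q j * G (x i) (x k)))))
    by (apply fsum_ext; intros i _; apply fsum_ext; intros j _;
        rewrite Rmult_assoc, fsum_mul_r; apply fsum_ext; intros; ring).
  apply trilinear_ijik_partial_bound; auto.
Qed.

Lemma trilinear_ijjk_partial_bound n A (x : nat -> R) G M a b :
  mixed_regular G -> trilinear_bound n A M -> unit_vec a -> unit_vec b ->
  Rabs (fsum n (fun i => fsum n (fun j => fsum n (fun k => A i j k * a i * b j * G (x j) (x k)))))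
  <= M * mixed_norm G.
Proof.
  intros HG HT Ha Hb. rewrite fsum_swap.
  rewrite (fsum_ext n _ (fun j => fsum n (fun k =>
    fsum n (fun i => A i j k * a i * b j) * G (x j) (x k)))).
  2:{ intros j _. rewrite fsum_swap. apply fsum_ext; intros k _.
      rewrite fsum_mul_r. apply fsum_ext; intros; ring. }
  apply bilinear_mixed_norm_bound; auto. intros p q Hp Hq.
  replace (fsum n (fun j => fsum n (fun k => fsum n (fun i => A i j k * a i * b j) * p j * q k)))
    with (tri n A a (fun j => b j * p j) q) by
    (unfold tri; rewrite fsum_swap; apply fsum_ext; intros j _; rewrite fsum_swap;
     apply fsum_ext; intros k _; rewrite Rmult_assoc, fsum_mul_r; apply fsum_ext; intros; ring).
  apply HT; auto using mul_unit_vec.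
Qed.

Lemma trilinear_ijjk_bound n A (x : nat -> R) F G M :
  mixed_regular F -> mixed_regular G -> trilinear_bound n A M ->
  Rabs (fsum n (fun i => fsum n (fun j => fsum n (fun k => A i j k * F (x i) (x j) * G (x j) (x k)))))
  <= M * mixed_norm G * mixed_norm F.
Proof.
  intros HF HG HT.
  rewrite (fsum_ext n _ (fun i => fsum n (fun j =>
    fsum n (fun k => A i j k * G (x j) (x k)) * F (x i) (x j)))).
  2:{ intros i _. apply fsum_ext; intros j _. rewrite fsum_mul_r. apply fsum_ext; intros; ring. }
  apply bilinear_mixed_norm_bound; auto. intros p q Hp Hq.
  replace (fsum n (fun i => fsum n (fun j => fsum n (fun k => A i j k * G (x j) (x k)) * p i * q j)))
    with (fsum n (fun i => fsum n (fun j => fsum n (fun k => A i j k * p i * q j * G (x j) (x k)))))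
    by (apply fsum_ext; intros i _; apply fsum_ext; intros j _;
        rewrite Rmult_assoc, fsum_mul_r; apply fsum_ext; intros; ring).
  apply trilinear_ijjk_partial_bound; auto.
Qed.

(** * Smooth functions and the H^3 norm *)

Lemma Derive_shift (f : R -> R) s c : Derive f (s + c) = Derive (fun x => f (x + c)) s.
Proof. unfold Derive. f_equal. apply Lim_ext. intros h. do 3 f_equal. ring. Qed.

Lemma periodic2_pdir d f : periodic2 f -> periodic2 (pdir d f).
Proof.
  intros Hp s t. destruct d; unfold pdir; split;
    rewrite ?Derive_shift; apply Derive_ext; intros; apply Hp.
Qed.

Lemma periodic2_pdl l f : periodic2 f -> periodic2 (pdl l f).
Proof. intros Hp. induction l; simpl; auto using periodic2_pdir. Qed.

Lemma smooth_mixed_regular f l : smooth_T2 f -> mixed_regular (pdl l f).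
Proof.
  intros [Hp Hs].
  split; [intros s t; exact (proj1 (proj2 (Hs l) s t))|].
  split; [intros s t; exact (proj2 (proj2 (Hs l) s t))|].
  split; [intros s t; exact (proj2 (proj2 (Hs (true :: l)) s t))|].
  split; [exact (C2_of_continuous2 _ (proj1 (Hs l)))|].
  split; [exact (C2_of_continuous2 _ (proj1 (Hs (true :: l))))|].
  split; [exact (C2_of_continuous2 _ (proj1 (Hs (false :: l))))|].
  split; [exact (C2_of_continuous2 _ (proj1 (Hs (false :: true :: l))))|].
  apply periodic2_pdl; auto.
Qed.

Lemma pdl_swap f l s t : smooth_T2 f ->
  pdl (true :: false :: l) f s t = pdl (false :: true :: l) f s t.
Proof.
  intros [_ Hs]. apply (Schwarz (pdl l f) s t).
  - exists (mkposreal 1 Rlt_0_1). intros u v _ _.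
    exact (conj (proj1 (proj2 (Hs l) u v)) (conj (proj2 (proj2 (Hs l) u v))
      (conj (proj1 (proj2 (Hs (false :: l)) u v)) (proj2 (proj2 (Hs (true :: l)) u v))))).
  - exact (C2_of_continuous2 _ (proj1 (Hs (true :: false :: l))) s t).
  - exact (C2_of_continuous2 _ (proj1 (Hs (false :: true :: l))) s t).
Qed.

(* From [|v| <= (1 + v^2) / 2] pointwise. *)
Lemma int_T2_abs_le φ : C2 φ -> int_T2 (fun s t => (φ s t) ^ 2) <= 1 ->
  int_T2 (fun s t => Rabs (φ s t)) <= (twoPI * twoPI + 1) / 2.
Proof.
  intros H H1. pose proof twoPI_pos. unfold int_T2 in *.
  assert (Cq : C2 (fun s t => / 2 + / 2 * (φ s t) ^ 2)).
  { intros s t. apply continuity_2d_pt_plus; [apply continuity_2d_pt_const|].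
    apply continuity_2d_pt_mult; [apply continuity_2d_pt_const|apply C2_sqr; auto]. }
  assert (Ca : C2 (fun s t => Rabs (φ s t))) by (apply C2_abs; auto).
  assert (Sq : forall s, ex_RInt (fun t => (φ s t) ^ 2) 0 twoPI)
    by (intros; apply ex_RInt_continuousR; intros;
        apply (continuity_2d_pt_slice2 (fun s t => (φ s t) ^ 2)), C2_sqr; auto).
  apply Rle_trans with (RInt (fun s => RInt (fun t => / 2 + / 2 * (φ s t) ^ 2) 0 twoPI) 0 twoPI).
  - apply RInt_le; [lra|apply ex_int_T2; auto|apply ex_int_T2; auto|].
    intros s _. apply RInt_le; [lra| | |].
    + apply ex_RInt_continuousR; intros; apply (continuity_2d_pt_slice2 (fun s t => Rabs (φ s t))); auto.
    + apply ex_RInt_continuousR; intros;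
        apply (continuity_2d_pt_slice2 (fun s t => / 2 + / 2 * (φ s t) ^ 2)); auto.
    + intros t _. cbv beta. rewrite <- (pow2_abs (φ s t)).
      pose proof (Rle_0_sqr (Rabs (φ s t) - 1)). unfold Rsqr in *. simpl. nra.
  - rewrite (RInt_ext (fun s => RInt (fun t => / 2 + / 2 * (φ s t) ^ 2) 0 twoPI)
      (fun s => twoPI / 2 + / 2 * RInt (fun t => (φ s t) ^ 2) 0 twoPI)).
    2:{ intros s _. rewrite RInt_plusR, RInt_constR, RInt_scalR;
        auto; [simpl; field|apply ex_RInt_const|apply ex_RInt_scalR; auto]. }
    rewrite RInt_plusR, RInt_constR, RInt_scalR; [lra| | |].
    + apply (ex_int_T2 (fun s t => (φ s t) ^ 2)), C2_sqr; auto.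
    + apply ex_RInt_const.
    + apply ex_RInt_scalR, (ex_int_T2 (fun s t => (φ s t) ^ 2)), C2_sqr; auto.
Qed.

Lemma int_T2_sqr_pd_le g a b : smooth_T2 g -> H3norm g <= 1 -> (a < 4)%nat -> (b < 4 - a)%nat ->
  int_T2 (fun x y => (pd a b g x y) ^ 2) <= 1.
Proof.
  intros Hg H Ha Hb.
  set (J := fun a b => int_T2 (fun x y => (pd a b g x y) ^ 2)).
  assert (HJ : forall a b, 0 <= J a b).
  { intros a' b'. apply int_T2_nonneg; [apply C2_sqr, C2_of_continuous2, Hg|].
    intros; apply pow2_ge_0. }
  set (S := fsum 4 (fun a => fsum (4 - a) (fun b => J a b))).
  assert (HS : S <= 1).
  { destruct (Rle_dec S 1) as [|Hn]; auto.
    assert (sqrt 1 < sqrt S) by (apply sqrt_lt_1_alt; lra).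
    change (sqrt S <= 1) in H. rewrite sqrt_1 in *. lra. }
  apply Rle_trans with (fsum (4 - a) (fun b => J a b)).
  - apply (fsum_ge_term (4 - a) (fun b => J a b) b); auto.
  - apply Rle_trans with S; auto.
    apply (fsum_ge_term 4 (fun a => fsum (4 - a) (fun b => J a b)) a); auto.
    intros; apply fsum_nonneg; auto.
Qed.

Lemma L1_pd_le g a b φ : smooth_T2 g -> H3norm g <= 1 -> (a < 4)%nat -> (b < 4 - a)%nat ->
  (forall s t, φ s t = pd a b g s t) -> int_T2 (fun s t => Rabs (φ s t)) <= (twoPI * twoPI + 1) / 2.
Proof.
  intros Hg H Ha Hb E.
  replace φ with (pd a b g) by (do 2 (apply functional_extensionality; intros); auto).
  apply int_T2_abs_le; [apply C2_of_continuous2, Hg|].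
  apply int_T2_sqr_pd_le; auto.
Qed.

(* Each of the four terms of [mixed_norm] of [d_x g] or [d_y g] is the [L^1] norm of some
   [pd a b g] with [a + b <= 3]. *)
Definition H3_L1_const : R := 4 * ((twoPI * twoPI + 1) / 2).

Lemma mixed_norm_dx_le g : smooth_T2 g -> H3norm g <= 1 -> mixed_norm (pdl (true :: nil) g) <= H3_L1_const.
Proof.
  intros Hg H. unfold mixed_norm, H3_L1_const.
  assert (E1 : forall s t, pdir false (pdl (true :: nil) g) s t = pd 1 1 g s t)
    by (intros; symmetry; apply pdl_swap; auto).
  assert (E2 : forall s t, pdir false (pdir true (pdl (true :: nil) g)) s t = pd 2 1 g s t).
  { intros s t. change (pdl (false :: true :: true :: nil) g s t
      = pdl (true :: true :: false :: nil) g s t).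
    rewrite <- (pdl_swap g (true :: nil) s t Hg).
    change (Derive (fun z => pdl (false :: true :: nil) g z t) s
      = Derive (fun z => pdl (true :: false :: nil) g z t) s).
    apply Derive_ext. intros z. symmetry. apply pdl_swap; auto. }
  pose proof (L1_pd_le g 1 0 (pdl (true :: nil) g) Hg H ltac:(lia) ltac:(simpl; lia) (fun s t => eq_refl)).
  pose proof (L1_pd_le g 1 1 _ Hg H ltac:(lia) ltac:(simpl; lia) E1).
  pose proof (L1_pd_le g 2 0 (pdir true (pdl (true :: nil) g)) Hg H ltac:(lia) ltac:(simpl; lia)
    (fun s t => eq_refl)).
  pose proof (L1_pd_le g 2 1 _ Hg H ltac:(lia) ltac:(simpl; lia) E2).
  lra.
Qed.

Lemma mixed_norm_dy_le g : smooth_T2 g -> H3norm g <= 1 -> mixed_norm (pdl (false :: nil) g) <= H3_L1_const.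
Proof.
  intros Hg H. unfold mixed_norm, H3_L1_const.
  assert (E : forall s t, pdir false (pdir true (pdl (false :: nil) g)) s t = pd 1 2 g s t)
    by (intros; symmetry; apply pdl_swap; auto).
  pose proof (L1_pd_le g 0 1 (pdl (false :: nil) g) Hg H ltac:(lia) ltac:(simpl; lia) (fun s t => eq_refl)).
  pose proof (L1_pd_le g 0 2 (pdir false (pdl (false :: nil) g)) Hg H ltac:(lia) ltac:(simpl; lia)
    (fun s t => eq_refl)).
  pose proof (L1_pd_le g 1 1 (pdir true (pdl (false :: nil) g)) Hg H ltac:(lia) ltac:(simpl; lia)
    (fun s t => eq_refl)).
  pose proof (L1_pd_le g 1 2 _ Hg H ltac:(lia) ltac:(simpl; lia) E).
  lra.
Qed.

(** * The fluctuation term *)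

Lemma continuous_fsum n (f : nat -> R -> R) x : (forall i, (i < n)%nat -> continuous (f i) x) ->
  continuous (fun s => fsum n (fun i => f i s)) x.
Proof.
  induction n; intros H; simpl; [apply continuous_const|].
  apply (continuous_plus (fun s => fsum n (fun i => f i s)) (f n));
    [apply IHn; intros|]; apply H; lia.
Qed.

Lemma continuous_coef_product β F G (u v w z : R -> R) s : continuous2 F -> continuous2 G ->
  continuous u s -> continuous v s -> continuous w s -> continuous z s ->
  continuous (fun s => β * F (u s) (v s) * G (w s) (z s)) s.
Proof.
  intros HF HG Hu Hv Hw Hz.
  apply (continuous_mult (fun s => β * F (u s) (v s)));
    [apply (continuous_mult (fun _ => β)); [apply continuous_const|]|];
    apply (continuous_comp_2 _ _ _); auto.
Qed.

Lemma fsum3_scal n c (X : nat -> nat -> nat -> R) :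
  c * fsum n (fun i => fsum n (fun j => fsum n (fun k => X i j k)))
  = fsum n (fun i => fsum n (fun j => fsum n (fun k => c * X i j k))).
Proof.
  rewrite <- fsum_scal. apply fsum_ext; intros i _.
  rewrite <- fsum_scal. apply fsum_ext; intros j _. symmetry. apply fsum_scal.
Qed.

Lemma continuous2_of_mixed_regular F : mixed_regular F -> continuous2 F.
Proof. intros [_ [_ [_ [C0 _]]]] x y. apply continuity_2d_pt_filterlim, C0. Qed.

Lemma abs_RInt_le_time (J : R -> R) K t : 0 <= t -> (forall s, continuous J s) ->
  (forall s, Rabs (J s) <= K) -> Rabs (RInt J 0 t) <= t * K.
Proof.
  intros Ht HJ HK. replace t with (t - 0) at 2 by ring.
  apply abs_RInt_le_const; auto. apply ex_RInt_continuousR; auto.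
Qed.

Lemma RInt_trilinear_ijik_bound n c B (θ : nat -> R -> R) F G M t :
  mixed_regular F -> mixed_regular G -> (forall i s, continuous (θ i) s) ->
  trilinear_bound n (fun i j k => c * B i j k) M -> 0 <= t ->
  Rabs (RInt (fun s => c * fsum n (fun i => fsum n (fun j => fsum n (fun k =>
    B i j k * F (θ i s) (θ j s) * G (θ i s) (θ k s))))) 0 t)
  <= t * (M * mixed_norm G * mixed_norm F).
Proof.
  intros HF HG Hθ HT Ht. apply abs_RInt_le_time; auto.
  - intros s. apply (continuous_mult (fun _ => c)); [apply continuous_const|].
    do 3 (apply continuous_fsum; intros).
    apply continuous_coef_product; auto; apply continuous2_of_mixed_regular; auto.
  - intros s. rewrite fsum3_scal.
    rewrite (fsum_ext n _ (fun i => fsum n (fun j => fsum n (fun k =>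
      c * B i j k * F (θ i s) (θ j s) * G (θ i s) (θ k s)))))
      by (intros; apply fsum_ext; intros; apply fsum_ext; intros; ring).
    apply (trilinear_ijik_bound n (fun i j k => c * B i j k) (fun i => θ i s)); auto.
Qed.

Lemma RInt_trilinear_ijjk_bound n c B (θ : nat -> R -> R) F G M t :
  mixed_regular F -> mixed_regular G -> (forall i s, continuous (θ i) s) ->
  trilinear_bound n (fun i j k => c * B i j k) M -> 0 <= t ->
  Rabs (RInt (fun s => c * fsum n (fun i => fsum n (fun j => fsum n (fun k =>
    B i j k * F (θ i s) (θ j s) * G (θ j s) (θ k s))))) 0 t)
  <= t * (M * mixed_norm G * mixed_norm F).
Proof.
  intros HF HG Hθ HT Ht. apply abs_RInt_le_time; auto.
  - intros s. apply (continuous_mult (fun _ => c)); [apply continuous_const|].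
    do 3 (apply continuous_fsum; intros).
    apply continuous_coef_product; auto; apply continuous2_of_mixed_regular; auto.
  - intros s. rewrite fsum3_scal.
    rewrite (fsum_ext n _ (fun i => fsum n (fun j => fsum n (fun k =>
      c * B i j k * F (θ i s) (θ j s) * G (θ j s) (θ k s)))))
      by (intros; apply fsum_ext; intros; apply fsum_ext; intros; ring).
    apply (trilinear_ijjk_bound n (fun i j k => c * B i j k) (fun i => θ i s)); auto.
Qed.

Lemma S_ijik_spec n p xi :
  trilinear_bound n (fun i j k => / INR n ^ 3 * (xihat p xi i j * xihat p xi i k)) (S_ijik n p xi)
  /\ 0 <= S_ijik n p xi.
Proof. exact (sign_sup_spec n _ (fun i j k => xihat p xi i j * xihat p xi i k)). Qed.

Lemma S_ijjk_spec n p xi :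
  trilinear_bound n (fun i j k => / INR n ^ 3 * (xihat p xi i j * xihat p xi j k)) (S_ijjk n p xi)
  /\ 0 <= S_ijjk n p xi.
Proof. exact (sign_sup_spec n _ (fun i j k => xihat p xi i j * xihat p xi j k)). Qed.

Lemma weighted_bound_le t T S G m C : 0 <= t <= T -> 0 <= S -> 0 <= G -> 0 <= m <= C ->
  t * (S * G * m) <= T * (C * G) * S.
Proof.
  intros Ht HS HG Hm.
  assert (0 <= S * G) by (apply Rmult_le_pos; auto).
  assert (S * G * m <= S * G * C) by (apply Rmult_le_compat_l; lra).
  assert (0 <= S * G * m) by (apply Rmult_le_pos; lra).
  assert (t * (S * G * m) <= T * (S * G * C)) by (apply Rmult_le_compat; lra).
  lra.
Qed.

Theorem mainTheorem6 (Gam : R -> R -> R) (HGam : smooth_T2 Gam) :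
  exists CG : R,
    forall (T : R) (p : nat -> R),
      0 < T -> (forall n, 0 < p n <= 1) ->
      exists N : nat,
        forall n : nat, (2 <= n)%nat -> (N <= n)%nat ->
        forall (xi : nat -> nat -> bool) (theta : nat -> R -> R),
          (forall i s, continuous (theta i) s) ->
          forall t, 0 <= t <= T ->
            Rbar_le (Hm3norm (Cn n (p n) xi Gam theta t))
                    (Finite (T * CG * (S_ijik n (p n) xi + S_ijjk n (p n) xi))).
Proof.
  exists (H3_L1_const * mixed_norm Gam). intros T p _ _. exists 0%nat.
  intros n _ _ xi theta Hθ t Ht.
  assert (RGam : mixed_regular Gam) by exact (smooth_mixed_regular Gam nil HGam).
  pose proof (mixed_norm_nonneg _ RGam) as HGam0.
  destruct (S_ijik_spec n (p n) xi) as [T1 HS1]. destruct (S_ijjk_spec n (p n) xi) as [T2 HS2].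
  apply Lub_Rbar_correct. intros v [g [Hg [Hg3 ->]]]. simpl.
  pose proof (smooth_mixed_regular g (true :: nil) Hg) as Rdx.
  pose proof (smooth_mixed_regular g (false :: nil) Hg) as Rdy.
  pose proof (RInt_trilinear_ijik_bound _ _ _ theta _ _ _ t Rdx RGam Hθ T1 (proj1 Ht)) as B1.
  pose proof (RInt_trilinear_ijjk_bound _ _ _ theta _ _ _ t Rdy RGam Hθ T2 (proj1 Ht)) as B2.
  pose proof (weighted_bound_le t T _ _ _ _ Ht HS1 HGam0
    (conj (mixed_norm_nonneg _ Rdx) (mixed_norm_dx_le g Hg Hg3))).
  pose proof (weighted_bound_le t T _ _ _ _ Ht HS2 HGam0
    (conj (mixed_norm_nonneg _ Rdy) (mixed_norm_dy_le g Hg Hg3))).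
  unfold Cn. eapply Rle_trans; [apply Rabs_triang|]. cbv beta in B1, B2. lra.
Qed.
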